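(* Let $H$ be a graph and let $v_1,\dots,v_k$ be mutually distinct vertices of $H$. Then $\sigma=(v_1,\dots,v_k)$ is an lc-sequence for the set system $\mathcal{D}_H$ if and only if $\varphi=*_c v_1 *_c v_2\cdots *_c v_k$ is an lc-sequence for $H$. Moreover, in this case, $\sigma$ is full if and only if $\varphi$ is full.
   Context: Graphs are finite, may have loops, but no multiple edges. A vertex is isolated if no edge (including a loop) is incident to it. For $v\in V(H)$, $N_H(v)=\{u\neq v: \{u,v\}\in E(H)\}$. For a looped vertex $v$, the local complement $H*v$ is the graph on $V(H)$ such that for every $p\subseteq V(H)$ with $|p|\in\{1,2\}$: $p\in E(H*v)$ iff either ($p\notin E(H)$ and $p\subseteq N_H(v)$) or ($p\in E(H)$ and $p\not\subseteq N_H(v)$). $H*_c v$ (only for looped $v$) is obtained from $H*v$ by removing all edges incident to $v$, including its loop. $\varphi=*_c v_1\cdots *_c v_k$ (applied left to right) is an lc-sequence for $H$ if $v_i$ is looped in $H*_c v_1\cdots*_c v_{i-1}$ for every $i$; it is full if $H\varphi$ consists only of isolated vertices. The adjacency matrix $A(H)$ is over $GF(2)$ with diagonal entry $1$ exactly at looped vertices; $H[X]$ is the induced subgraph on $X$. $\mathcal{D}_H=(V(H),S)$ with $X\in S$ iff $A(H[X])$ is invertible (the empty matrix counts as invertible). For a set system $D=(V,S)$, a sequence $(v_1,\dots,v_k)$ of mutually distinct elements of $V$ is an lc-sequence for $D$ if $\{v_1,\dots,v_i\}\in S$ for all $i\in\{0,\dots,k\}$; it is full if moreover $\{v_1,\dots,v_k\}$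 is an inclusion-maximal element of $S$. *)

From HB Require Import structures.
From mathcomp Require Import all_boot all_order all_algebra.
Set Implicit Arguments. Unset Strict Implicit. Unset Printing Implicit Defensive.
Import GRing.Theory.

(* A graph (finite, loops allowed, no multiple edges) on vertex set V is a
   symmetric boolean relation e : rel V; e v v means v is looped.
   The edge {u,w} (|{u,w}| in {1,2}) is present iff e u w. *)

Section Graphs.
Variable V : finType.

Definition nbhd (e : rel V) (v : V) : pred V := fun u => (u != v) && e u v.

Definition lc (e : rel V) (v : V) : rel V :=
  fun u w => if nbhd e v u && nbhd e v w then ~~ e u w else e u w.

Definition lcc (e : rel V) (v : V) : rel V :=
  fun u w => [&& lc e v u w, u != v & w != v].

Definition lcc_seq (e : rel V) (s : seq V) : rel V := foldl lcc e s.

Fixpoint lcseq_graph (e : rel V) (s : seq V) : bool :=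
  if s is v :: s' then e v v && lcseq_graph (lcc e v) s' else true.

Definition all_isolated (e : rel V) : bool := [forall u, forall w, ~~ e u w].

Definition full_lcseq_graph (e : rel V) (s : seq V) : bool :=
  lcseq_graph e s && all_isolated (lcc_seq e s).

Definition adj_sub (e : rel V) (X : {set V}) : 'M['F_2]_#|X| :=
  \matrix_(i, j) ((e (enum_val i) (enum_val j))%:R)%R.

Definition DH (e : rel V) : {set {set V}} :=
  [set X : {set V} | adj_sub e X \in unitmx].

Definition lcseq_ss (S : {set {set V}}) (s : seq V) : bool :=
  uniq s && all (fun i => [set x in take i s] \in S) (iota 0 (size s).+1).

Definition full_lcseq_ss (S : {set {set V}}) (s : seq V) : bool :=
  lcseq_ss S s && maxset (fun X => X \in S) [set x in s].

End Graphs.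

From mathcomp Require Import all_boot all_order all_algebra.
Set Implicit Arguments. Unset Strict Implicit. Unset Printing Implicit Defensive.
Import GRing.Theory.

(* Over GF(2), pivoting on a looped vertex v is Gaussian elimination on the
   diagonal entry 1 of A(H): for v outside X, A(H[X + v]) is invertible iff
   the Schur complement A((H *_c v)[X]) is.  Iterating along the sequence,
   X + {v_1..v_k} is in D_H iff X is in D_(H phi); for X empty this makes
   every prefix condition of sigma the looped-vertex condition of phi.  The
   maximal elements of D_(H phi) are empty iff H phi has no edge, since a
   loop or an edge between two unlooped vertices gives a non-empty invertible
   submatrix; this is the statement about full sequences. *)

Section LocalComplementation.
Variable V : finType.
Implicit Types (e : rel V) (s : seq V).

Lemma lcc_sym e v : symmetric e -> symmetric (lcc e v).
Proof.
move=> e_sym u w; rewrite /lcc; have -> : lc e v u w = lc e v w u by rewrite /lc e_sym andbC.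
by case: (u != v); case: (w != v); rewrite /= ?andbF.
Qed.

Lemma lcc_seq_sym e s : symmetric e -> symmetric (lcc_seq e s).
Proof. by elim: s e => //= v s IHs e e_sym; apply/IHs/lcc_sym. Qed.

Lemma lcc_isolated e v u : (forall w, ~~ e u w) -> forall w, ~~ lcc e v u w.
Proof.
by move=> u_iso w; rewrite /lcc /lc /nbhd (negbTE (u_iso v)) andbF /= (negbTE (u_iso w)).
Qed.

Lemma lcc_isolated_pivot e v w : ~~ lcc e v v w.
Proof. by rewrite /lcc eqxx andbF. Qed.

Lemma lcc_seq_isolated e s u : (forall w, ~~ e u w) -> forall w, ~~ lcc_seq e s u w.
Proof. by elim: s e => //= v s IHs e u_iso; apply/IHs/lcc_isolated. Qed.

Lemma lcc_seq_isolated_mem e s u : u \in s -> forall w, ~~ lcc_seq e s u w.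
Proof.
elim: s e => //= v s IHs e; rewrite inE => /predU1P [->|/IHs //].
exact/lcc_seq_isolated/lcc_isolated_pivot.
Qed.

Lemma lcseq_graph_isolated e s u :
  (forall w, ~~ e u w) -> lcseq_graph e s -> u \notin s.
Proof.
elim: s e => //= v s IHs e u_iso /andP [evv lc_s]; rewrite inE negb_or.
apply/andP; split; last exact: IHs (lcc_isolated v u_iso) lc_s.
by apply: contraTneq evv => <-; apply: u_iso.
Qed.

Lemma lcseq_graph_cons_notin e v s : lcseq_graph (lcc e v) s -> v \notin s.
Proof. exact/lcseq_graph_isolated/lcc_isolated_pivot. Qed.

End LocalComplementation.

Section PivotGF2.
Variable V : finType.
Implicit Types (e : rel V) (X Y : {set V}).
Local Open Scope ring_scope.

Lemma F2_addr_eq0 (a b : 'F_2) : (a + b == 0) = (a == b).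
Proof. by rewrite -(subr_eq0 a) oppr_pchar2 // pchar_Fp. Qed.

Definition adjF e u w : 'F_2 := (e u w)%:R.

Lemma adjF_lcc e v u w : symmetric e -> u != v -> w != v ->
  adjF (lcc e v) u w = adjF e u w + adjF e u v * adjF e v w.
Proof.
move=> e_sym uv wv; rewrite /adjF /lcc /lc /nbhd uv wv /= (e_sym w v).
by case: (e u v); case: (e v w); case: (e u w) => //=; apply/eqP.
Qed.

Definition singular_on e X : Prop := exists x : V -> 'F_2,
  (exists2 u, u \in X & x u != 0) /\
  {in X, forall w, \sum_(u in X) x u * adjF e u w = 0}.

Lemma DH_nonsingular e X : X \in DH e <-> ~ singular_on e X.
Proof.
rewrite inE unitmxE unitfE; split.
- move=> /det0P detN0 [x [[u uX xu] x_ker]]; apply: detN0.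
  exists (\row_i x (enum_val i)).
    apply/eqP=> /matrixP /(_ 0 (enum_rank_in uX u)); rewrite !mxE.
    by rewrite enum_rankK_in //; apply/eqP.
  apply/matrixP=> i j; rewrite !mxE -[RHS](x_ker _ (enum_valP j)) [RHS]big_enum_val.
  by apply: eq_bigr => k _; rewrite !mxE.
- move=> x_sing; apply/det0P=> [[y yN0 y_ker]]; apply: x_sing.
  have [i yi] : exists i, y 0 i != 0.
    apply/existsP; apply: contraR yN0 => /existsPn y0.
    by apply/eqP/matrixP=> a b; rewrite ord1 mxE; apply/eqP/negPn.
  have uX := enum_valP i.
  exists (fun u => y 0 (enum_rank_in uX u)); split.
    by exists (enum_val i); rewrite ?enum_valK_in.
  move=> w wX; move/matrixP: y_ker => /(_ 0 (enum_rank_in uX w)); rewrite !mxE => y_kerw.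
  rewrite big_enum_val -[RHS]y_kerw.
  by apply: eq_bigr => k _; rewrite !mxE enum_valK_in enum_rankK_in.
Qed.

Section Pivot.
Variables (e : rel V) (v : V) (X : {set V}).
Hypotheses (e_sym : symmetric e) (evv : e v v) (vX : v \notin X).

Let neq_pivot u : u \in X -> u != v.
Proof. by apply: contraTneq => ->. Qed.

(* The row of v is what the Schur complement eliminates: once x v equals the
   v-th entry of x A over X, the remaining equations are those of H *_c v. *)
Lemma sum_pivot (x : V -> 'F_2) w : w != v ->
  x v = \sum_(u in X) x u * adjF e u v ->
  \sum_(u in v |: X) x u * adjF e u w = \sum_(u in X) x u * adjF (lcc e v) u w.
Proof.
move=> wv xv; rewrite big_setU1 //= xv mulr_suml -big_split /=.
by apply: eq_bigr => u uX; rewrite (adjF_lcc e_sym (neq_pivot uX) wv) mulrDr mulrA addrC.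
Qed.

Lemma sum_pivot_row (x : V -> 'F_2) :
  (\sum_(u in v |: X) x u * adjF e u v == 0) = (x v == \sum_(u in X) x u * adjF e u v).
Proof. by rewrite big_setU1 //= /adjF evv mulr1 F2_addr_eq0. Qed.

Lemma singular_on_pivot : singular_on e (v |: X) <-> singular_on (lcc e v) X.
Proof.
split=> [[x [[u0 u0X xu0] x_ker]]|[x [[u0 u0X xu0] x_ker]]].
- have /eqP := x_ker v (setU11 _ _); rewrite sum_pivot_row => /eqP xv.
  exists x; split.
    case/setU1P: u0X => [u0v|]; last by exists u0.
    have [u /andP [uX xu]|x0] := pickP [pred u | (u \in X) && (x u != 0)].
      by exists u.
    case/eqP: xu0; rewrite u0v xv big1 // => u uX.
    by move: (x0 u); rewrite /= uX => /negbFE/eqP ->; rewrite mul0r.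
  by move=> w wX; rewrite -(sum_pivot (neq_pivot wX) xv) x_ker ?setU1r.
- pose xv := \sum_(u in X) x u * adjF e u v.
  pose x' u := if u == v then xv else x u.
  have eq_x' : {in X, x' =1 x} by move=> u /neq_pivot /negbTE; rewrite /x' => ->.
  have sum_x' w : \sum_(u in X) x' u * adjF e u w = \sum_(u in X) x u * adjF e u w.
    by apply: eq_bigr => u /eq_x' ->.
  have x'v : x' v = \sum_(u in X) x' u * adjF e u v by rewrite sum_x' /x' eqxx.
  exists x'; split; first by exists u0; rewrite ?setU1r ?eq_x'.
  move=> w /setU1P [->|wX]; first by apply/eqP; rewrite sum_pivot_row x'v.
  rewrite (sum_pivot (neq_pivot wX) x'v) -[RHS](x_ker w wX).
  by apply: eq_bigr => u /eq_x' ->.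
Qed.

Lemma DH_pivot : (v |: X \in DH e) = (X \in DH (lcc e v)).
Proof.
apply/idP/idP => /DH_nonsingular X_ns; apply/DH_nonsingular => X_sing;
  by apply: X_ns; apply/singular_on_pivot.
Qed.

End Pivot.

Lemma DH_set0 e : set0 \in DH e.
Proof. by apply/DH_nonsingular => [[x [[u]]]]; rewrite inE. Qed.

Lemma DH_set1 e v : ([set v] \in DH e) = e v v.
Proof.
apply/idP/idP => [/DH_nonsingular v_ns|evv].
- apply/negPn/negP => evvN; apply: v_ns; exists (fun=> 1); split.
    by exists v; rewrite ?inE.
  by move=> w /set1P ->; rewrite big_set1 /adjF (negbTE evvN) mulr0.
- apply/DH_nonsingular => [[x [[u /set1P -> xv]]]] /(_ v (set11 v)) /eqP.
  by rewrite big_set1 /adjF evv mulr1 (negbTE xv).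
Qed.

Lemma DH_edgeless e X : (forall u w, ~~ e u w) -> (X \in DH e) = (X == set0).
Proof.
move=> e0; apply/idP/eqP => [/DH_nonsingular X_ns|->]; last exact: DH_set0.
apply/setP => y; rewrite inE; apply/negP => yX; apply: X_ns.
exists (fun=> 1); split; first by exists y.
by move=> w _; apply: big1 => u _; rewrite /adjF (negbTE (e0 _ _)) mulr0.
Qed.

Lemma DH_pair e u w : u != w -> ~~ e u u -> ~~ e w w -> e u w -> e w u ->
  [set u; w] \in DH e.
Proof.
move=> uw euu eww euw ewu; apply/DH_nonsingular => [[x [[z zX xz] x_ker]]].
have uW : u \notin [set w] by rewrite inE.
move: (x_ker u (set21 u w)) (x_ker w (set22 u w)).
rewrite !big_setU1 //= !big_set1 /adjF (negbTE euu) (negbTE eww) euw ewu.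
rewrite !mulr0 !mulr1 add0r addr0 => xw xu.
by move: xz; case/set2P: zX => ->; rewrite ?xu ?xw eqxx.
Qed.

Lemma DH_edge e u w : symmetric e -> e u w ->
  exists Y, [/\ Y \in DH e, Y != set0 & Y \subset [set u; w]].
Proof.
move=> e_sym euw; have [euu|euuN] := boolP (e u u).
  exists [set u]; rewrite DH_set1 sub1set set21; split=> //.
  by apply/set0Pn; exists u; apply: set11.
have [eww|ewwN] := boolP (e w w).
  exists [set w]; rewrite DH_set1 sub1set set22; split=> //.
  by apply/set0Pn; exists w; apply: set11.
have uw : u != w by apply: contraNneq euuN => uw; rewrite {2}uw.
exists [set u; w]; split => //; last by apply/set0Pn; exists u; apply: set21.
by apply: DH_pair; rewrite // e_sym.
Qed.

End PivotGF2.

Section SetSystems.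
Variable V : finType.
Implicit Types (S : {set {set V}}) (s : seq V).

Lemma all_iota0S (P : pred nat) n :
  all P (iota 0 n.+1) = P 0%N && all (fun i => P i.+1) (iota 0 n).
Proof. by rewrite /= (iotaDl 1 0) all_map. Qed.

Lemma lcseq_ss_set1 S v s : lcseq_ss S (v :: s) -> [set v] \in S.
Proof. by case/andP=> _ /allP /(_ 1%N); rewrite mem_iota /= take0 set_seq1; apply. Qed.

Lemma lcseq_ss_cons S S' v s :
  (forall X : {set V}, v \notin X -> (v |: X \in S) = (X \in S')) ->
  lcseq_ss S (v :: s) = [&& set0 \in S, v \notin s & lcseq_ss S' s].
Proof.
move=> S_S'; rewrite /lcseq_ss cons_uniq -andbA [size _]/= all_iota0S.
have [vs|vsN] := boolP (v \in s); rewrite [~~ _]/= ?andbF // !andTb andbCA.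
congr (_ && (_ && _)); apply: eq_all => i /=; rewrite set_cons S_S' //.
by apply: contra vsN; rewrite inE => /mem_take.
Qed.

End SetSystems.

Section Correspondence.
Variable V : finType.
Implicit Types (e : rel V) (s : seq V) (Y : {set V}).

Lemma lcseq_ss_DH e s : symmetric e -> lcseq_ss (DH e) s = lcseq_graph e s.
Proof.
elim: s e => [|v s IHs] e e_sym /=; first by rewrite /lcseq_ss /= set_nil DH_set0.
case evv: (e v v) => /=; last first.
  by apply: contraFF evv => /lcseq_ss_set1; rewrite DH_set1.
rewrite (@lcseq_ss_cons _ _ (DH (lcc e v))) => [|X]; last exact: DH_pivot.
rewrite DH_set0 IHs; last exact: lcc_sym.
by case lc_s: (lcseq_graph _ _); rewrite ?andbF // (lcseq_graph_cons_notin lc_s).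
Qed.

Lemma DH_lcc_seq e s Y : symmetric e -> lcseq_graph e s -> {in Y, forall y, y \notin s} ->
  (Y :|: [set x in s] \in DH e) = (Y \in DH (lcc_seq e s)).
Proof.
elim: s e Y => [|v s IHs] e Y e_sym; first by rewrite set_nil setU0.
case/andP=> evv lc_s Y_s; have vs := lcseq_graph_cons_notin lc_s.
have vYs : v \notin Y :|: [set x in s].
  by rewrite !inE negb_or vs andbT; apply/negP => /Y_s; rewrite inE eqxx.
rewrite set_cons setUCA DH_pivot // IHs //; first exact: lcc_sym.
by move=> y /Y_s; rewrite inE negb_or => /andP [].
Qed.

Lemma maxset_DH_lcc_seq e s : symmetric e -> lcseq_graph e s ->
  maxset (fun X => X \in DH e) [set x in s] = all_isolated (lcc_seq e s).
Proof.
move=> e_sym lc_s; have G_sym := lcc_seq_sym s e_sym.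
have DH_s := DH_lcc_seq e_sym lc_s.
apply/maxsetP/forallP => [[_ s_max] u|G_iso].
- apply/forallP=> w; apply/negP=> Guw.
  have [Y [YG YN0 Yuw]] := DH_edge G_sym Guw.
  have Y_s : {in Y, forall y, y \notin s}.
    move=> y /(subsetP Yuw) /set2P [] ->; apply/negP => /(lcc_seq_isolated_mem e).
      by move/(_ w); rewrite Guw.
    by move/(_ u); rewrite G_sym Guw.
  rewrite -DH_s // in YG; move: (s_max _ YG (subsetUr _ _)) => /setP Ys.
  case/set0Pn: YN0 => y yY; move: (Y_s y yY) (Ys y).
  by rewrite !inE yY => /negbTE ->.
- have G0 u w : ~~ lcc_seq e s u w by move: (G_iso u) => /forallP.
  split=> [|B B_DH sB].
    by have := DH_s set0; rewrite set0U DH_set0 => ->// y; rewrite inE.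
  have B_s : {in B :\: [set x in s], forall y, y \notin s}.
    by move=> y; rewrite !inE => /andP [].
  move: B_DH; rewrite -(setID B [set x in s]) (setIidPr sB) setUC DH_s //.
  by rewrite DH_edgeless // => /eqP ->; rewrite set0U.
Qed.

End Correspondence.

Theorem mainTheorem8 (V : finType) (e : rel V) (e_sym : symmetric e)
  (s : seq V) (s_uniq : uniq s) :
  (lcseq_ss (DH e) s = lcseq_graph e s) /\
  (lcseq_graph e s -> full_lcseq_ss (DH e) s = full_lcseq_graph e s).
Proof.
have lcseq_eq := lcseq_ss_DH s e_sym.
split=> // lc_s.
by rewrite /full_lcseq_ss /full_lcseq_graph lcseq_eq lc_s maxset_DH_lcc_seq.
Qed.
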